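(* Let $q\ge7$ be a prime power and $p$ an odd prime, let $E/\mathbb{F}_q$ be an elliptic curve with $E(\mathbb{F}_q)\cong\mathbb{Z}_p\oplus\mathbb{Z}_p$, $\mathcal{P}=E(\mathbb{F}_q)$, let $Q\in E(\mathbb{F}_{q^2})\setminus E(\mathbb{F}_q)$ satisfy $Q\oplus\phi(Q)=\infty$, let $k$ be an integer with $p\mid k$ and $0<k<p^2/2$, and let $D=k(Q+\phi(Q))$. Then the NMDS code $\mathcal{C}(E,\mathcal{P},D)$, with parameters $[p^2,2k,p^2-2k]$, satisfies $A_w>0$ for every $w$ with $p^2-2k\le w\le p^2$.
   Context: $A_w$ is the number of codewords of Hamming weight $w$. Elliptic curve $E/\mathbb{F}_q$: nonsingular Weierstrass curve with point at infinity $\infty$ as identity of the group law $\oplus$; $\phi$ is the $q$-Frobenius $(x,y)\mapsto(x^q,y^q)$. For $\mathcal{P}=\{P_1,\dots,P_n\}\subseteq E(\mathbb{F}_q)$ and a Galois-invariant divisor $D$ with support disjoint from $\mathcal{P}$ and $0<\deg D<n$, $\mathcal{C}(E,\mathcal{P},D)=\{(f(P_1),\dots,f(P_n)):f\in\mathscr{L}(D)\}$ where $\mathscr{L}(D)=\{f\in\mathbb{F}_q(E)^\times:\operatorname{div}(f)\ge-D\}\cup\{0\}$. *)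

From HB Require Import structures.
From mathcomp Require Import all_boot all_algebra all_field.
From mathcomp Require Import boolp.
Set Implicit Arguments. Unset Strict Implicit. Unset Printing Implicit Defensive.
Import GRing.Theory.
Local Open Scope ring_scope.

(* y^2 + a1 x y + a3 y = x^3 + a2 x^2 + a4 x + a6 *)
Record wcurve (L : fieldType) := WCurve {
  wa1 : L; wa2 : L; wa3 : L; wa4 : L; wa6 : L }.

Definition wmap (F L : fieldType) (j : {rmorphism F -> L}) (E : wcurve F) :
  wcurve L := WCurve (j (wa1 E)) (j (wa2 E)) (j (wa3 E)) (j (wa4 E)) (j (wa6 E)).

(* Projective points: None is the point at infinity, Some (a,b) affine. *)
Definition onEb (L : fieldType) (E : wcurve L) (P : option (L * L)) : bool :=
  match P with
  | None => true
  | Some (a, b) =>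
      b ^+ 2 + wa1 E * a * b + wa3 E * b ==
      a ^+ 3 + wa2 E * a ^+ 2 + wa4 E * a + wa6 E
  end.

(* Nonsingularity: no affine point over any finite extension of the base
   field has both partial derivatives of the Weierstrass equation vanishing
   (singular points are algebraic, and infinity is always smooth). *)
Definition nonsingular (F : finFieldType) (E : wcurve F) : Prop :=
  forall (L : finFieldType) (j : {rmorphism F -> L}) (a b : L),
    onEb (wmap j E) (Some (a, b)) ->
    ~ (j (wa1 E) * b - 3%:R * a ^+ 2 - 2%:R * j (wa2 E) * a - j (wa4 E) = 0 /\
       2%:R * b + j (wa1 E) * a + j (wa3 E) = 0).

Definition ptmap (K L : fieldType) (s : {rmorphism K -> L})
  (P : option (K * K)) : option (L * L) :=
  omap (fun ab => (s ab.1, s ab.2)) P.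

Definition frob (K : fieldType) (q : nat) (P : option (K * K)) :
  option (K * K) := omap (fun ab => (ab.1 ^+ q, ab.2 ^+ q)) P.

(* The chord-tangent group law (Silverman, Alg. III.2.3). *)
Definition addE (L : fieldType) (E : wcurve L) (P1 P2 : option (L * L)) :
  option (L * L) :=
  match P1, P2 with
  | None, _ => P2
  | _, None => P1
  | Some (x1, y1), Some (x2, y2) =>
      if (x1 == x2) && (y1 + y2 + wa1 E * x2 + wa3 E == 0) then None
      else
        let lam := if x1 != x2 then (y2 - y1) / (x2 - x1)
                   else (3%:R * x1 ^+ 2 + 2%:R * wa2 E * x1 + wa4 E
                         - wa1 E * y1) / (2%:R * y1 + wa1 E * x1 + wa3 E) in
        let nu := if x1 != x2 then (y1 * x2 - y2 * x1) / (x2 - x1)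
                  else (- x1 ^+ 3 + wa4 E * x1 + 2%:R * wa6 E - wa3 E * y1)
                        / (2%:R * y1 + wa1 E * x1 + wa3 E) in
        let x3 := lam ^+ 2 + wa1 E * lam - wa2 E - x1 - x2 in
        Some (x3, - (lam + wa1 E) * x3 - nu - wa3 E)
  end.

(* An element of {poly {poly L}} is a polynomial in y whose coefficients are
   polynomials in x. *)
Definition ev2 (L : fieldType) (p : {poly {poly L}}) (a b : L) : L :=
  (map_poly (fun c : {poly L} => c.[a]) p).[b].

Definition Xx (L : fieldType) : {poly {poly L}} := ('X : {poly L})%:P.

Definition wpoly (L : fieldType) (E : wcurve L) : {poly {poly L}} :=
  'X ^+ 2 + (wa1 E)%:P%:P * Xx L * 'X + (wa3 E)%:P%:P * 'X
  - (Xx L ^+ 3 + (wa2 E)%:P%:P * Xx L ^+ 2 + (wa4 E)%:P%:P * Xx L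
     + (wa6 E)%:P%:P).

Definition inW (L : fieldType) (E : wcurve L) (p : {poly {poly L}}) : Prop :=
  exists K : {poly {poly L}}, p = K * wpoly E.

(* A rational function on E is represented by a pair (G, H), meaning G/H in
   Frac(L[x,y]/(W)), with H not in the ideal (W). *)
Definition rfun (L : fieldType) := ({poly {poly L}} * {poly {poly L}})%type.

Definition wf_rfun (L : fieldType) (E : wcurve L) (f : rfun L) : Prop :=
  ~ inW E f.2.

Definition nonzero_rfun (L : fieldType) (E : wcurve L) (f : rfun L) : Prop :=
  ~ inW E f.1 /\ ~ inW E f.2.

Definition req (L : fieldType) (E : wcurve L) (f g : rfun L) : Prop :=
  inW E (f.1 * g.2 - g.1 * f.2).

Definition rmul (L : fieldType) (f g : rfun L) : rfun L :=
  (f.1 * g.1, f.2 * g.2).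
Definition rdiv (L : fieldType) (f g : rfun L) : rfun L :=
  (f.1 * g.2, f.2 * g.1).
Definition rexp (L : fieldType) (f : rfun L) (m : nat) : rfun L :=
  (f.1 ^+ m, f.2 ^+ m).

Definition rmap (F L : fieldType) (j : {rmorphism F -> L}) (f : rfun F) :
  rfun L := (map_poly (map_poly j) f.1, map_poly (map_poly j) f.2).

Definition totdeg_le (L : fieldType) (p : {poly {poly L}}) (d : nat) : Prop :=
  forall i : nat, (p`_i != 0) -> (size (nth 0%R p i) + i <= d.+1)%N.

(* At infinity we use the homogeneous representation
   G'(X,Y,Z)/H'(X,Y,Z) of common degree d, evaluated at (0:1:0), i.e. the
   coefficients of y^d. *)
Definition val_at (L : fieldType) (E : wcurve L) (R : option (L * L))
    (f : rfun L) (c : L) : Prop :=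
  match R with
  | Some (a, b) =>
      exists g : rfun L, req E f g /\ ev2 g.2 a b != 0 /\
                         c = ev2 g.1 a b / ev2 g.2 a b
  | None =>
      exists (d : nat) (g : rfun L), req E f g /\
        totdeg_le g.1 d /\ totdeg_le g.2 d /\
        (g.2)`_d`_0 != 0 /\ c = (g.1)`_d`_0 / (g.2)`_d`_0
  end.

Definition regular_at (L : fieldType) (E : wcurve L) (R : option (L * L))
    (f : rfun L) : Prop := exists c, val_at E R f c.

Definition uniformizer (L : fieldType) (E : wcurve L) (R : option (L * L))
    (t : rfun L) : Prop :=
  nonzero_rfun E t /\ val_at E R t 0 /\
  forall g : rfun L, wf_rfun E g -> val_at E R g 0 -> regular_at E R (rdiv g t).

Definition ord_ge_neg (L : fieldType) (E : wcurve L) (R : option (L * L))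
    (f : rfun L) (m : nat) : Prop :=
  exists t : rfun L, uniformizer E R t /\ regular_at E R (rmul (rexp t m) f).

(* A point R of
   E over a finite extension L of F lies in the support of D = k(Q + phi(Q))
   iff R is the image of Q under some F-embedding of K into L (the two such
   images being Q and phi(Q)); then D(R) = k, otherwise D(R) = 0.
   f is in L(D) iff div f >= -D, i.e. ord_R f >= -D(R) at every point R of E
   over the algebraic closure of F (every such point is defined over a
   finite extension L of F, and is L-rational there). *)
Definition conj_of (F K L : fieldType) (iota : {rmorphism F -> K})
    (j : {rmorphism F -> L}) (Q : option (K * K)) (R : option (L * L)) : Prop :=
  exists s : {rmorphism K -> L}, (forall x, s (iota x) = j x) /\ ptmap s Q = R.

Definition inLD (F K : finFieldType) (E : wcurve F) (iota : {rmorphism F -> K})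
    (Q : option (K * K)) (k : nat) (f : rfun F) : Prop :=
  wf_rfun E f /\
  forall (L : finFieldType) (j : {rmorphism F -> L}) (R : option (L * L)),
    onEb (wmap j E) R ->
    (conj_of iota j Q R -> ord_ge_neg (wmap j E) R (rmap j f) k) /\
    (~ conj_of iota j Q R -> ord_ge_neg (wmap j E) R (rmap j f) 0).

Definition ratpts (F : finFieldType) (E : wcurve F) : {set option (F * F)} :=
  [set P | onEb E P].

(* Codewords: evaluation vectors (f(P_1),...,f(P_n)) of f in L(D), with
   P_i := enum_val i the enumeration of E(F_q). *)
Definition in_code (F K : finFieldType) (E : wcurve F)
    (iota : {rmorphism F -> K}) (Q : option (K * K)) (k : nat)
    (c : 'rV[F]_#|ratpts E|) : Prop :=
  exists f : rfun F, inLD E iota Q k f /\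
    forall i : 'I_#|ratpts E|, val_at E (enum_val i) f (c 0 i).

Arguments in_code {F K} E iota Q k c.

Definition hweight (F : finFieldType) (n : nat) (c : 'rV[F]_n) : nat :=
  #|[set i : 'I_n | c 0 i != 0]|.

Definition A_w (F K : finFieldType) (E : wcurve F)
    (iota : {rmorphism F -> K}) (Q : option (K * K)) (k w : nat) : nat :=
  #|[set c : 'rV[F]_#|ratpts E| | `[< in_code E iota Q k c >] && (hweight c == w)]|.

Definition ratpts_iso_ZpZp (F : finFieldType) (E : wcurve F) (p : nat) : Prop :=
  exists psi : 'Z_p * 'Z_p -> option (F * F),
    [/\ forall u, onEb E (psi u),
        injective psi,
        forall P, onEb E P -> exists u, psi u = P &
        forall u v, psi (u.1 + v.1, u.2 + v.2) = addE E (psi u) (psi v)].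

(* The codewords are evaluations of the functions
     f = (x - x_Q)^-(m + o) * prod_(b in B) (x - b),   o \in {0, 1},  m + o <= k,
   where B is a set of m abscissae of affine points of E(F_q).  Since
   Q + phi(Q) = infinity, Q and phi(Q) share an abscissa x_Q in F_q above which
   there is no rational point, and x - x_Q is a local parameter at Q and phi(Q);
   so f has poles only there, of order m + o <= k, and f lies in L(D).  As p is
   odd, E(F_q) has no 2-torsion, so above each b in B lie exactly two rational
   points, at which f vanishes; at infinity f vanishes iff o = 1.  Thus f
   vanishes at exactly 2m + o of the p^2 rational points, and every weight
   w >= p^2 - 2k is attained. *)

From HB Require Import structures.
From mathcomp Require Import all_boot all_algebra all_field.
From mathcomp Require Import boolp ring zify.
Import GRing.Theory.
Local Open Scope ring_scope.
Set Implicit Arguments. Unset Strict Implicit. Unset Printing Implicit Defensive.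

Section WeierstrassLocal.
Variable (L : fieldType) (E : wcurve L).
Local Notation P2 := {poly {poly L}}.
Local Notation x := (Xx L).
Local Notation cc c := ((c%:P)%:P : {poly {poly L}}).
Implicit Types (p q : P2) (a b c : L).

Lemma ev2_horner_eval p a b : ev2 p a b = (map_poly (horner_eval a) p).[b].
Proof.
by rewrite /ev2; congr (_.[_]); apply: eq_map_poly => c; rewrite horner_evalE.
Qed.

Lemma ev2D p q a b : ev2 (p + q) a b = ev2 p a b + ev2 q a b.
Proof. by rewrite !ev2_horner_eval rmorphD hornerD. Qed.
Lemma ev2N p a b : ev2 (- p) a b = - ev2 p a b.
Proof. by rewrite !ev2_horner_eval rmorphN hornerN. Qed.
Lemma ev2M p q a b : ev2 (p * q) a b = ev2 p a b * ev2 q a b.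
Proof. by rewrite !ev2_horner_eval rmorphM hornerM. Qed.
Lemma ev2C c a b : ev2 (cc c) a b = c.
Proof. by rewrite ev2_horner_eval map_polyC hornerC /= horner_evalE hornerC. Qed.
Lemma ev2x a b : ev2 x a b = a.
Proof. by rewrite ev2_horner_eval /Xx map_polyC hornerC /= horner_evalE hornerX. Qed.
Lemma ev2X a b : ev2 'X a b = b.
Proof. by rewrite ev2_horner_eval map_polyX hornerX. Qed.
Lemma ev21 a b : ev2 1 a b = 1.
Proof. by rewrite -[1]/(cc 1) ev2C. Qed.
Lemma ev2Xn p n a b : ev2 (p ^+ n) a b = ev2 p a b ^+ n.
Proof. by elim: n => [|n IH]; rewrite ?expr0 ?ev21 // !exprS ev2M IH. Qed.

Definition ev2E := (ev2D, ev2N, ev2M, ev2C, ev2x, ev2X, ev21, ev2Xn).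

Lemma req_refl f : req E f f.
Proof. by exists 0; rewrite mul0r subrr. Qed.

Lemma size_wpoly_ge3 : (3 <= size (wpoly E))%N.
Proof.
have c2 : (wpoly E)`_2 = 1 by rewrite /wpoly /Xx !coefE /=; ring.
by case: leqP => // s; move: c2; rewrite nth_default // => /esym/eqP; rewrite oner_eq0.
Qed.

Lemma notinW_size_le2 p : p != 0 -> (size p <= 2)%N -> ~ inW E p.
Proof.
move=> p0 sp [K hK]; move: p0 sp; rewrite hK mulf_eq0 negb_or => /andP[K0 W0].
rewrite size_mul //; have := size_wpoly_ge3; have : (0 < size K)%N by rewrite size_poly_gt0.
move=> h1 h2; rewrite -subn1; move: h1 h2.
set s1 := size K; set s2 := size (wpoly E); clearbody s1 s2; lia.
Qed.

(* Division by x - a coefficientwise; the remainder is p(a, y). *)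
Lemma split_x_sub p a : exists U : P2,
  p = (x - cc a) * U + map_poly polyC (map_poly (horner_eval a) p) /\
  forall i, leq (size U`_i) (size p`_i).-1.
Proof.
pose U := \poly_(i < size p) ((p`_i - ((p`_i).[a])%:P) %/ ('X - a%:P)).
have dv i : ('X - a%:P) %| (p`_i - ((p`_i).[a])%:P).
  by rewrite dvdp_XsubCl /root !hornerE subrr.
exists U; split.
  apply/polyP => i; rewrite coefD /Xx -rmorphB coefCM coef_poly coef_map /=.
  rewrite coef_map /= horner_evalE.
  case: (ltnP i (size p)) => hi; first by rewrite mulrC divpK // subrK.
  by rewrite mulr0 add0r nth_default // horner0.
move=> i; rewrite coef_poly; case: (ltnP i (size p)) => hi; last by rewrite size_poly0.
rewrite size_divp ?polyXsubC_eq0 // size_XsubC /=.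
have [->|pi0] := eqVneq p`_i 0; first by rewrite horner0 subr0 size_poly0.
have := size_polyC ((p`_i).[a]); have : leq 1 (size p`_i) by rewrite size_poly_gt0.
have := size_polyD (p`_i) (- ((p`_i).[a])%:P); rewrite size_polyN.
set s1 := size _; set s2 := size _; set s3 := size _; clearbody s1 s2 s3.
move=> h1 h2 h3; rewrite -!subn1; move: h1 h3; case: (_ != 0) => /= h1 h3; lia.
Qed.

Lemma split_ev2_eq0 p a b : ev2 p a b = 0 ->
  exists U V : P2, p = (x - cc a) * U + ('X - cc b) * V.
Proof.
move=> h; have [U [hU _]] := split_x_sub p a.
have : root (map_poly (horner_eval a) p) b by rewrite /root -ev2_horner_eval h.
move=> /factor_theorem [q hq].
exists U, (map_poly polyC q); rewrite {1}hU hq rmorphM /= mulrC.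
rewrite rmorphB /= map_polyX map_polyC /=; ring.
Qed.

Section AffinePoint.
Variables (a b : L).

(* At a point (a, b) of E, W = (x - a) Wx + (y - b) Wy where Wx(a, b) and
   Wy(a, b) are (up to sign) the partial derivatives of W at (a, b). *)
Definition wsplit_x : P2 := cc (wa1 E * b) - (x ^+ 2 + cc a * x + cc (a ^+ 2))
   - cc (wa2 E) * (x + cc a) - cc (wa4 E).
Definition wsplit_y : P2 := 'X + cc b + cc (wa1 E) * x + cc (wa3 E).

Lemma wpoly_split : onEb E (Some (a, b)) ->
  wpoly E = (x - cc a) * wsplit_x + ('X - cc b) * wsplit_y.
Proof.
move=> /eqP h.
have e : wpoly E - ((x - cc a) * wsplit_x + ('X - cc b) * wsplit_y) =
  cc (b ^+ 2 + wa1 E * a * b + wa3 E * b - (a ^+ 3 + wa2 E * a ^+ 2 + wa4 E * a + wa6 E)).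
  rewrite /wpoly /wsplit_x /wsplit_y /Xx; ring.
by apply/eqP; rewrite -subr_eq0 e h subrr !polyC0.
Qed.

Lemma ev2_wsplit_x :
  ev2 wsplit_x a b = wa1 E * b - 3%:R * a ^+ 2 - 2%:R * wa2 E * a - wa4 E.
Proof. rewrite /wsplit_x !ev2E; ring. Qed.
Lemma ev2_wsplit_y : ev2 wsplit_y a b = 2%:R * b + wa1 E * a + wa3 E.
Proof. rewrite /wsplit_y !ev2E; ring. Qed.
End AffinePoint.

Lemma uniformizer_of_split a b (t s B1 B2 : P2) :
  wpoly E = t * B1 + s * B2 -> ev2 B2 a b != 0 -> ev2 t a b = 0 ->
  t != 0 -> (size t <= 2)%N ->
  (forall G, ev2 G a b = 0 -> exists U V : P2, G = t * U + s * V) ->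
  uniformizer E (Some (a, b)) (t, 1).
Proof.
move=> hW hB2 ht t0 st hsplit; split; [|split].
- split; first exact: notinW_size_le2.
  by apply: notinW_size_le2; rewrite ?oner_eq0 ?size_poly1.
- exists (t, 1); split; first exact: req_refl.
  by rewrite /= ev21 ht mul0r oner_eq0.
move=> g _ [g' [[K hK] [hg2 hg1]]].
have g1z : ev2 g'.1 a b = 0.
  by move/eqP: hg1; rewrite eq_sym mulf_eq0 invr_eq0 (negbTE hg2) orbF => /eqP.
have [U [V hG]] := hsplit _ g1z.
(* Modulo W, s = - t B1 / B2, so g1 = t (U B2 - V B1) / B2. *)
exists (ev2 (U * B2 - V * B1) a b / ev2 (g'.2 * B2) a b).
exists (U * B2 - V * B1, g'.2 * B2); split; last by split => //; rewrite ev2M mulf_neq0.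
exists (B2 * K + g.2 * V) => /=.
have -> : (B2 * K + g.2 * V) * wpoly E = B2 * (K * wpoly E) + g.2 * V * wpoly E by ring.
rewrite -hK hW hG; ring.
Qed.

Lemma uniformizer_x_sub a b :
  onEb E (Some (a, b)) -> 2%:R * b + wa1 E * a + wa3 E != 0 ->
  uniformizer E (Some (a, b)) (x - cc a, 1).
Proof.
move=> hon hy.
apply: (@uniformizer_of_split a b _ ('X - cc b) (wsplit_x a b) (wsplit_y b)).
- exact: wpoly_split.
- by rewrite ev2_wsplit_y.
- by rewrite !ev2E subrr.
- by rewrite /Xx -rmorphB polyC_eq0 polyXsubC_eq0.
- by rewrite /Xx -rmorphB size_polyC; case: (_ != 0).
- by move=> G; apply: split_ev2_eq0.
Qed.

Lemma uniformizer_affine a b : onEb E (Some (a, b)) ->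
  ~ (wa1 E * b - 3%:R * a ^+ 2 - 2%:R * wa2 E * a - wa4 E = 0 /\
     2%:R * b + wa1 E * a + wa3 E = 0) ->
  exists t, uniformizer E (Some (a, b)) t.
Proof.
move=> hon hns.
have [hy|hy] := eqVneq (2%:R * b + wa1 E * a + wa3 E) 0; last first.
  by exists (x - cc a, 1); apply: uniformizer_x_sub.
have hx : wa1 E * b - 3%:R * a ^+ 2 - 2%:R * wa2 E * a - wa4 E != 0.
  by apply/eqP => h; apply: hns.
exists ('X - cc b, 1).
apply: (@uniformizer_of_split a b _ (x - cc a) (wsplit_y b) (wsplit_x a b)).
- by rewrite (wpoly_split hon) addrC.
- by rewrite ev2_wsplit_x.
- by rewrite !ev2E subrr.
- by rewrite polyXsubC_eq0.
- by rewrite size_XsubC.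
- by move=> G /split_ev2_eq0 [U [V ->]]; exists V, U; apply: addrC.
Qed.

Lemma totdeg_leP p d : totdeg_le p d <-> forall i, leq (size p`_i) (d.+1 - i).
Proof.
split=> h i.
  have [->|nz] := eqVneq p`_i 0; first by rewrite size_poly0.
  by have := h i nz; set s1 := size _; clearbody s1; lia.
move=> nz; have := h i; have : leq 1 (size p`_i) by rewrite size_poly_gt0.
by set s1 := size _; clearbody s1; lia.
Qed.

Lemma totdeg_leD p q d : totdeg_le p d -> totdeg_le q d -> totdeg_le (p + q) d.
Proof.
move=> /totdeg_leP hp /totdeg_leP hq; apply/totdeg_leP => i; rewrite coefD.
by apply: leq_trans (size_polyD _ _) _; rewrite geq_max hp hq.
Qed.
Lemma totdeg_leB p q d : totdeg_le p d -> totdeg_le q d -> totdeg_le (p - q) d.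
Proof.
move=> hp /totdeg_leP hq; apply: totdeg_leD => //.
by apply/totdeg_leP => i; rewrite coefN size_polyN.
Qed.
Lemma totdeg_leW p d e : (d <= e)%N -> totdeg_le p d -> totdeg_le p e.
Proof.
move=> de /totdeg_leP hp; apply/totdeg_leP => i; apply: leq_trans (hp i) _.
by clear hp; lia.
Qed.

Lemma totdeg_leM p q d e : totdeg_le p d -> totdeg_le q e -> totdeg_le (p * q) (d + e).
Proof.
move=> /totdeg_leP hp /totdeg_leP hq; apply/totdeg_leP => n; rewrite coefM.
apply: leq_trans (size_sum _ _ _) _; apply/bigmax_leqP => [[i hi]] _ /=.
have [->|nz1] := eqVneq p`_i 0; first by rewrite mul0r size_poly0.
have [->|nz2] := eqVneq q`_(n - i) 0; first by rewrite mulr0 size_poly0.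
rewrite size_mul //.
have := hp i; have := hq (n - i)%N.
have : leq 1 (size p`_i) by rewrite size_poly_gt0.
have : leq 1 (size q`_(n - i)) by rewrite size_poly_gt0.
set s1 := size _; set s2 := size _; clearbody s1 s2 => h1 h2 h3 h4.
by rewrite -subn1; lia.
Qed.

Lemma totdeg_leC c : totdeg_le (cc c) 0.
Proof.
apply/totdeg_leP => -[|i]; last by rewrite coefC /= size_poly0.
by rewrite coefC /= size_polyC; case: (_ != 0).
Qed.
Arguments totdeg_leC : clear implicits.
Lemma totdeg_le_x : totdeg_le x 1.
Proof.
apply/totdeg_leP => -[|i]; last by rewrite /Xx coefC /= size_poly0.
by rewrite /Xx coefC /= size_polyX.
Qed.
Lemma totdeg_le_y : totdeg_le ('X : P2) 1.
Proof. by apply/totdeg_leP => -[|[|i]]; rewrite coefX //= ?size_poly0 ?size_poly1. Qed.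
Lemma totdeg_le1 : totdeg_le (1 : P2) 0.
Proof. by rewrite -[1]/(cc 1); apply: totdeg_leC. Qed.

Lemma totdeg_le_coef_eq0 p d i : totdeg_le p d -> (d < i)%N -> p`_i = 0.
Proof.
move=> /totdeg_leP h di; apply/eqP; rewrite -size_poly_eq0 -leqn0.
by apply: leq_trans (h i) _; lia.
Qed.

(* [p`_d`_0] is the coefficient of y^d, the value at (0 : 1 : 0) of the
   homogenization of degree d. *)
Lemma top_coefM p q d e : totdeg_le p d -> totdeg_le q e ->
  (p * q)`_(d + e)`_0 = p`_d`_0 * q`_e`_0.
Proof.
move=> hp hq; have hd : (d < (d + e).+1)%N by rewrite ltnS leq_addr.
rewrite coefM (bigD1 (Ordinal hd)) //=.
rewrite addKn big1 ?addr0 ?coef0M // => -[i hi] /=; rewrite -val_eqE /= => ne.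
case: (ltngtP i d) ne => // h _; last by rewrite (totdeg_le_coef_eq0 hp) ?mul0r.
by rewrite (totdeg_le_coef_eq0 hq) ?mulr0 //; lia.
Qed.

Definition quad_y (c1 c2 c3 c4 c5 : L) : P2 :=
  'X * 'X + cc c1 * x * 'X + cc c2 * 'X + cc c3 * (x * x) + cc c4 * x + cc c5.

Lemma totdeg_le_quad_y c1 c2 c3 c4 c5 : totdeg_le (quad_y c1 c2 c3 c4 c5) 2.
Proof.
have t1 : totdeg_le x 2 by apply: (totdeg_leW _ totdeg_le_x).
have t0 (c : L) : totdeg_le (cc c) 2 by apply: (totdeg_leW _ (totdeg_leC c)).
apply: totdeg_leD (t0 _); apply: totdeg_leD; first apply: totdeg_leD.
- apply: totdeg_leD; last by apply: (totdeg_leM (totdeg_leC _) (totdeg_leW _ totdeg_le_y)).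
  apply: totdeg_leD; first exact: (totdeg_leM totdeg_le_y totdeg_le_y).
  exact: (totdeg_leM (totdeg_leM (totdeg_leC _) totdeg_le_x) totdeg_le_y).
- exact: (totdeg_leM (totdeg_leC _) (totdeg_leM totdeg_le_x totdeg_le_x)).
- exact: (totdeg_leM (totdeg_leC _) t1).
Qed.

Lemma top_coef_quad_y c1 c2 c3 c4 c5 : (quad_y c1 c2 c3 c4 c5)`_2`_0 = 1.
Proof. rewrite /quad_y /Xx !coefE /=; ring. Qed.

Definition wpoly_quad : P2 := quad_y (wa1 E) (wa3 E) (- wa2 E) (- wa4 E) (- wa6 E).

Lemma wpoly_quadE : wpoly E = wpoly_quad - x * x * x.
Proof. rewrite /wpoly_quad /quad_y /wpoly; ring. Qed.

Lemma split_x_top_eq0 g D : totdeg_le g D -> g`_D`_0 = 0 ->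
  exists A B : P2, [/\ g = x * A + B, totdeg_le (A * 'X) D & totdeg_le (B * 'X) D].
Proof.
move=> hg g0; have [A [hA hAs]] := split_x_sub g 0.
rewrite !rmorph0 subr0 in hA; set B := map_poly _ _ in hA.
exists A, B; split => //.
  apply/totdeg_leP => -[|j]; rewrite coefMX /= ?size_poly0 //.
  apply: leq_trans (hAs j) _; have /totdeg_leP := hg; move/(_ j).
  by set s1 := size _; clearbody s1 => hh; rewrite -subn1; lia.
apply/totdeg_leP => -[|j]; rewrite coefMX /= ?size_poly0 //.
rewrite /B coef_map /= coef_map /= horner_evalE.
case: (ltngtP j D) => hj.
- by apply: leq_trans (size_polyC_leq1 _) _; lia.
- by rewrite (totdeg_le_coef_eq0 hg hj) horner0 polyC0 size_poly0.
- by rewrite hj horner_coef0 g0 polyC0 size_poly0.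
Qed.

(* The pair (x, y) stands for x / y, which has a simple zero at infinity. *)
Lemma uniformizer_infinity : uniformizer E None (x, 'X).
Proof.
have x0 : x != 0 by rewrite /Xx polyC_eq0 polyX_eq0.
have sx : (size x <= 2)%N by rewrite /Xx size_polyC; case: (_ != 0).
have tV : totdeg_le wpoly_quad 2 by apply: totdeg_le_quad_y.
split; [|split].
- split; first exact: notinW_size_le2.
  by apply: notinW_size_le2; rewrite ?polyX_eq0 ?size_polyX.
- exists 1%N, (x, 'X); split; first exact: req_refl.
  split; first exact: totdeg_le_x. split; first exact: totdeg_le_y.
  by rewrite /= /Xx !coefE /= oner_eq0 mul0r.
move=> g _ [D [g' [[K hK] [h1 [h2 [hc hv]]]]]].
have g1z : g'.1`_D`_0 = 0.
  by move/eqP: hv; rewrite eq_sym mulf_eq0 invr_eq0 (negbTE hc) orbF => /eqP.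
have [A [B [hA tA tB]]] := split_x_top_eq0 h1 g1z.
(* g / (x / y) = (x A + B) y x^2 / (g2 x^3), and x^3 = wpoly_quad - W. *)
set N := (A * 'X) * wpoly_quad + x * x * (B * 'X).
exists (N`_(D + 2)`_0 / (g'.2 * wpoly_quad)`_(D + 2)`_0).
exists (D + 2)%N, (N, g'.2 * wpoly_quad) => /=; split.
  exists ('X * wpoly_quad * K + 'X * g.2 * B).
  have -> : ('X * wpoly_quad * K + 'X * g.2 * B) * wpoly E =
     'X * wpoly_quad * (K * wpoly E) + 'X * g.2 * B * wpoly E by ring.
  rewrite -hK hA wpoly_quadE /N /=; ring.
split.
  apply: totdeg_leD; first exact: (totdeg_leM tA tV).
  by rewrite addnC; apply: totdeg_leM tB; apply: totdeg_leM totdeg_le_x totdeg_le_x.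
split; first exact: (totdeg_leM h2 tV).
have tV1 : wpoly_quad`_2`_0 = 1 by apply: top_coef_quad_y.
by split => //; rewrite (top_coefM h2 tV) tV1 mulr1.
Qed.

Lemma val_atM R f g c1 c2 : val_at E R f c1 -> val_at E R g c2 ->
  val_at E R (rmul f g) (c1 * c2).
Proof.
have hreq f' g' : req E f f' -> req E g g' -> req E (rmul f g) (rmul f' g').
  move=> [K1 hK1] [K2 hK2]; exists (K1 * (g.1 * g'.2) + (f'.1 * f.2) * K2).
  have -> : (K1 * (g.1 * g'.2) + f'.1 * f.2 * K2) * wpoly E =
    (K1 * wpoly E) * (g.1 * g'.2) + (f'.1 * f.2) * (K2 * wpoly E) by ring.
  rewrite -hK1 -hK2 /rmul /=; ring.
case: R => [[a b]|].
  move=> [f' [r1 [n1 ->]]] [g' [r2 [n2 ->]]].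
  exists (rmul f' g'); split; first exact: hreq.
  by rewrite /rmul /= !ev2M mulf_neq0 // mulf_div.
move=> [d1 [f' [r1 [t11 [t12 [n1 ->]]]]]] [d2 [g' [r2 [t21 [t22 [n2 ->]]]]]].
exists (d1 + d2)%N, (rmul f' g'); split; first exact: hreq.
rewrite /rmul /=; split; first exact: totdeg_leM.
split; first exact: totdeg_leM.
by rewrite !top_coefM // mulf_neq0 // mulf_div.
Qed.

Lemma val_at1 R : val_at E R (1, 1) 1.
Proof.
case: R => [[al be]|].
  by exists (1, 1); split; [exact: req_refl|rewrite /= ev21 oner_eq0 divr1].
exists 0%N, (1, 1); split; first exact: req_refl.
split; first exact: totdeg_le1. split; first exact: totdeg_le1.
by rewrite /= !coefE /= oner_eq0 divr1.
Qed.

Section LinearRatio.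
Variable a : L.
Local Notation u := (x - cc a).

(* u^3 + W has degree 2 and top coefficient 1: it represents u^3 at infinity. *)
Definition wpoly_cube : P2 := quad_y (wa1 E) (wa3 E) (- wa2 E - 3%:R * a)
  (3%:R * a ^+ 2 - wa4 E) (- a ^+ 3 - wa6 E).
Lemma wpoly_cubeE : wpoly_cube = u ^+ 3 + wpoly E.
Proof. rewrite /wpoly_cube /quad_y /wpoly; ring. Qed.

Lemma totdeg_le_u : totdeg_le u 1.
Proof. by apply: totdeg_leB totdeg_le_x (totdeg_leW _ (totdeg_leC _)). Qed.
Lemma top_coef_uu : (u * u)`_2`_0 = 0.
Proof. by rewrite (top_coefM totdeg_le_u totdeg_le_u) /Xx !coefE /= !subrr mul0r. Qed.

Lemma val_at_inf_ratio b : val_at E None (x - cc b, u) 1.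
Proof.
exists 2%N, (wpoly_cube + cc (a - b) * (u * u), wpoly_cube); split.
  by exists (cc (a - b)); rewrite /= wpoly_cubeE; ring.
split.
  apply: totdeg_leD; first exact: totdeg_le_quad_y.
  exact: totdeg_leM (totdeg_leC _) (totdeg_leM totdeg_le_u totdeg_le_u).
split; first exact: totdeg_le_quad_y.
rewrite /= top_coef_quad_y oner_eq0; split => //.
rewrite coefD coefD (top_coefM (totdeg_leC _) (totdeg_leM totdeg_le_u totdeg_le_u)).
by rewrite top_coef_uu top_coef_quad_y mulr0 addr0 divr1.
Qed.

Lemma val_at_inf_inv : val_at E None (1, u) 0.
Proof.
exists 2%N, (u * u, wpoly_cube); split; first by exists 1; rewrite /= wpoly_cubeE; ring.
split; first exact: totdeg_leM totdeg_le_u totdeg_le_u.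
split; first exact: totdeg_le_quad_y.
by rewrite /= top_coef_quad_y oner_eq0 top_coef_uu mul0r.
Qed.

Lemma val_at_aff_ratio b al be : al != a ->
  val_at E (Some (al, be)) (x - cc b, u) ((al - b) / (al - a)).
Proof.
move=> ha; exists (x - cc b, u); split; first exact: req_refl.
by rewrite /= !ev2E subr_eq0 ha.
Qed.

Lemma val_at_aff_inv al be : al != a ->
  val_at E (Some (al, be)) (1, u) (1 / (al - a)).
Proof.
move=> ha; exists (1, u); split; first exact: req_refl.
by rewrite /= !ev2E subr_eq0 ha.
Qed.
End LinearRatio.

End WeierstrassLocal.

Section TestFunction.
Variable (L : fieldType).
Local Notation x := (Xx L).
Local Notation cc c := ((c%:P)%:P : {poly {poly L}}).

Definition test_fun (a : L) (bs : seq L) (o : bool) : rfun L :=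
  foldr (fun b f => rmul (x - cc b, x - cc a) f)
        (if o then (1, x - cc a) else (1, 1)) bs.
Definition test_val (a : L) (bs : seq L) (o : bool) (al : L) : L :=
  foldr (fun b v => (al - b) / (al - a) * v) (if o then 1 / (al - a) else 1) bs.

Lemma test_fun_den a bs o : (test_fun a bs o).2 = (x - cc a) ^+ (size bs + o).
Proof.
elim: bs => [|b bs IH] /=; first by case: o; rewrite /= ?expr1 ?expr0.
by rewrite IH exprS.
Qed.

Lemma val_at_inf_test_fun (E : wcurve L) a bs o :
  val_at E None (test_fun a bs o) (if o then 0 else 1).
Proof.
elim: bs => [|b bs IH]; first by case: o; [apply: val_at_inf_inv | apply: (val_at1 E None)].
by rewrite -[X in val_at _ _ _ X]mul1r; apply: val_atM IH; apply: val_at_inf_ratio.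
Qed.

Lemma val_at_aff_test_fun (E : wcurve L) a bs o al be : al != a ->
  val_at E (Some (al, be)) (test_fun a bs o) (test_val a bs o al).
Proof.
move=> ha; elim: bs => [|b bs IH].
  by case: o; [apply: val_at_aff_inv | apply: (val_at1 E (Some (al, be)))].
by apply: val_atM IH; apply: val_at_aff_ratio.
Qed.

Lemma test_val_eq0 a bs o al : al != a -> (test_val a bs o al == 0) = (al \in bs).
Proof.
move=> ha; have ha' : al - a != 0 by rewrite subr_eq0.
elim: bs => [|b bs IH] /=.
  by case: o; rewrite ?div1r ?invr_eq0 ?oner_eq0 // (negbTE ha').
by rewrite !mulf_eq0 invr_eq0 (negbTE ha') orbF IH in_cons subr_eq0.
Qed.

Lemma wf_test_fun (E : wcurve L) a bs o : wf_rfun E (test_fun a bs o).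
Proof.
rewrite /wf_rfun test_fun_den; apply: notinW_size_le2.
  by rewrite expf_neq0 // /Xx -rmorphB polyC_eq0 polyXsubC_eq0.
by rewrite /Xx -rmorphB -rmorphXn size_polyC; case: (_ != 0).
Qed.

Lemma regular_at_test_fun (E : wcurve L) a bs (o : bool) k be : (size bs + o <= k)%N ->
  regular_at E (Some (a, be)) (rmul (rexp (x - cc a, 1) k) (test_fun a bs o)).
Proof.
move=> hk; set g := (x - cc a) ^+ (k - (size bs + o)) * (test_fun a bs o).1.
exists (ev2 g a be / 1), (g, 1); split; last by rewrite /= ev21 oner_eq0.
exists 0; rewrite mul0r /rmul /rexp /= test_fun_den expr1n mul1r mulr1.
by rewrite mulrAC -exprD subnK // subrr.
Qed.

End TestFunction.

Section MapRfun.
Variables (F L : fieldType) (j : {rmorphism F -> L}).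

Lemma map_poly2_x_subC c :
  map_poly (map_poly j) (Xx F - (c%:P)%:P) = Xx L - ((j c)%:P)%:P.
Proof.
transitivity (map_poly (map_poly j) (Xx F) - map_poly (map_poly j) ((c%:P)%:P)).
  exact: rmorphB.
by rewrite /Xx !map_polyC /= map_polyX map_polyC.
Qed.

Lemma rmap_rmul f g : rmap j (rmul f g) = rmul (rmap j f) (rmap j g).
Proof. by rewrite /rmap /rmul /=; congr (_, _); apply: rmorphM. Qed.

Lemma rmap_test_fun a bs o : rmap j (test_fun a bs o) = test_fun (j a) (map j bs) o.
Proof.
elim: bs => [|b bs IH]; first by case: o; rewrite /rmap /= ?rmorph1 ?map_poly2_x_subC.
by rewrite [LHS]rmap_rmul IH /rmap /= !map_poly2_x_subC.
Qed.
End MapRfun.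

Lemma frobenius_fixed_image (F K : finFieldType) (iota : {rmorphism F -> K}) (z : K) :
  z ^+ #|F| = z -> exists c, z = iota c.
Proof.
move=> hz; case: (pickP (fun c => z == iota c)) => [c /eqP ->|none]; first by exists c.
exfalso.
have q1 : (1 < #|F|)%N := card_finNzRing_gt1 F.
pose P : {poly K} := 'X^#|F| - 'X.
have sP : size P = #|F|.+1.
  by rewrite /P size_polyDl ?size_polyXn // size_polyN size_polyX; lia.
have P0 : P != 0 by rewrite -size_poly_eq0 sP.
have hall : all (root P) (z :: map iota (enum F)).
  rewrite /= /root /P !hornerE hz subrr eqxx /=.
  by apply/allP => w /mapP [c _ ->]; rewrite /root !hornerE -rmorphXn expf_card subrr.
have hu : uniq (z :: map iota (enum F)).
  rewrite /= map_inj_uniq ?enum_uniq ?andbT; last exact: fmorph_inj.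
  by apply/mapP => -[c _ hc]; have := none c; rewrite hc eqxx.
by have := max_poly_roots P0 hall hu; rewrite sP /= size_map -cardE ltnn.
Qed.

Section ConjugatePoint.
Variables (F K : finFieldType) (E : wcurve F) (iota : {rmorphism F -> K}).

(* Q = -phi(Q) forces x(Q)^q = x(Q), and y(Q)^q = -y(Q) - a1 x(Q) - a3 with
   y(Q) not in F_q; then 2 y(Q) + a1 x(Q) + a3 = y(Q) - y(Q)^q != 0. *)
Lemma conj_point_form (Q : option (K * K)) :
  onEb (wmap iota E) Q -> ~ (exists P, onEb E P /\ ptmap iota P = Q) ->
  addE (wmap iota E) Q (frob #|F| Q) = None ->
  exists a0 y1, [/\ Q = Some (iota a0, y1), forall c, y1 != iota c &
    2%:R * y1 + iota (wa1 E) * iota a0 + iota (wa3 E) != 0].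
Proof.
case: Q => [[x1 y1]|] hQ hnr hf; last by exfalso; apply: hnr; exists None.
move: hf; rewrite /=; case: ifP => // /andP [/eqP hx /eqP hy] _.
have [a0 ha0] := frobenius_fixed_image iota (esym hx).
have ny c : y1 != iota c.
  apply/eqP => hc; apply: hnr; exists (Some (a0, c)); split; last by rewrite /= -ha0 -hc.
  move: hQ; rewrite /= ha0 hc -!rmorphXn -!rmorphM -!rmorphD.
  by rewrite (inj_eq (fmorph_inj iota)).
exists a0, y1; split => //; first by rewrite ha0.
apply/eqP => h2.
have [c hc] : exists c, y1 = iota c.
  apply: (frobenius_fixed_image iota); rewrite -hx in hy.
  apply/eqP; rewrite -subr_eq0; apply/eqP.
  have -> : y1 ^+ #|F| - y1 = (y1 + y1 ^+ #|F| + iota (wa1 E) * x1 + iota (wa3 E))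
     - (2%:R * y1 + iota (wa1 E) * iota a0 + iota (wa3 E)) by rewrite ha0; ring.
  by rewrite hy h2 subrr.
by move: (ny c); rewrite hc eqxx.
Qed.

Variables (a0 : F) (y1 : K).
Hypotheses (hy1 : forall c, y1 != iota c)
  (hon : onEb (wmap iota E) (Some (iota a0, y1))) (hK : #|K| = (#|F| ^ 2)%N).

(* Above the abscissa a0 the curve equation reads y^2 = r0 + r1 y. *)
Definition r0 := a0 ^+ 3 + wa2 E * a0 ^+ 2 + wa4 E * a0 + wa6 E.
Definition r1 := - (wa1 E * a0 + wa3 E).

Lemma ordinate_sq (L : fieldType) (j : {rmorphism F -> L}) (be : L) :
  onEb (wmap j E) (Some (j a0, be)) -> be ^+ 2 = j r0 + j r1 * be.
Proof.
move=> /= /eqP h; apply/eqP; rewrite -subr_eq0; apply/eqP.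
have -> : be ^+ 2 - (j r0 + j r1 * be) =
  (be ^+ 2 + j (wa1 E) * j a0 * be + j (wa3 E) * be) -
  (j a0 ^+ 3 + j (wa2 E) * j a0 ^+ 2 + j (wa4 E) * j a0 + j (wa6 E)).
  by rewrite /r0 /r1 !rmorphD !rmorphN ?rmorphM ?rmorphXn; ring.
by rewrite h subrr.
Qed.

Lemma no_ratpt_above c : ~~ onEb E (Some (a0, c)).
Proof.
apply/negP => /= /eqP h.
have e : (y1 - iota c) * (y1 + iota c + iota (wa1 E * a0 + wa3 E)) = 0.
  have -> : (y1 - iota c) * (y1 + iota c + iota (wa1 E * a0 + wa3 E)) =
    (y1 ^+ 2 - (iota r0 + iota r1 * y1)) - iota (c ^+ 2 + wa1 E * a0 * c + wa3 E * c
      - (a0 ^+ 3 + wa2 E * a0 ^+ 2 + wa4 E * a0 + wa6 E)).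
    by rewrite /r0 /r1 !rmorphB !rmorphD !rmorphN ?rmorphM ?rmorphXn; ring.
  by rewrite (ordinate_sq hon) h !subrr rmorph0 subr0.
move/eqP: e; rewrite mulf_eq0 => /orP [|] /eqP e.
  by move: (hy1 c); rewrite -(subr0 y1) -e subKr eqxx.
move: (hy1 (- c - (wa1 E * a0 + wa3 E))); rewrite rmorphB rmorphN.
have -> : y1 = - iota c - iota (wa1 E * a0 + wa3 E).
  by apply/eqP; rewrite -subr_eq0 -e; apply/eqP; ring.
by rewrite eqxx.
Qed.

(* K = F_q(y1) is a 2-dimensional F_q-space with basis 1, y1. *)
Definition coords_y1 (c : F * F) : K := iota c.1 + iota c.2 * y1.

Lemma coords_y1_inj : injective coords_y1.
Proof.
move=> [c0 c1] [d0 d1]; rewrite /coords_y1 /= => h.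
have [e1|ne] := eqVneq c1 d1; first by move: h; rewrite e1 => /addIr /fmorph_inj ->.
exfalso; move: (hy1 ((c0 - d0) / (d1 - c1))).
rewrite fmorph_div !rmorphB.
have nz : iota d1 - iota c1 != 0 by rewrite -rmorphB fmorph_eq0 subr_eq0 eq_sym.
have -> : iota c0 - iota d0 = (iota d1 - iota c1) * y1.
  apply/eqP; rewrite -subr_eq0; apply/eqP.
  by move: h => /eqP; rewrite -subr_eq0 => /eqP h'; rewrite -h'; ring.
by rewrite mulrC mulKf // eqxx.
Qed.

Definition coords_y1_inv (z : K) : F * F := odflt (0, 0) [pick c | coords_y1 c == z].

Lemma coords_y1_invK z : coords_y1 (coords_y1_inv z) = z.
Proof.
have hc : (#|K| <= #|{: F * F}|)%N by rewrite card_prod hK expnS expn1.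
have /codomP [c hc'] := inj_card_onto coords_y1_inj hc z.
rewrite /coords_y1_inv; case: pickP => [c' /eqP //|]; move/(_ c).
by rewrite hc' eqxx.
Qed.

Lemma coords_y1K c : coords_y1_inv (coords_y1 c) = c.
Proof. by apply: coords_y1_inj; rewrite coords_y1_invK. Qed.

Section Embedding.
Variables (L : finFieldType) (j : {rmorphism F -> L}) (be : L).
Hypothesis hbe : onEb (wmap j E) (Some (j a0, be)).

(* The F_q-embedding of K sending y1 to be: both are roots of y^2 - r1 y - r0. *)
Definition conj_emb (z : K) : L :=
  j (coords_y1_inv z).1 + j (coords_y1_inv z).2 * be.

Lemma conj_emb_coords c : conj_emb (coords_y1 c) = j c.1 + j c.2 * be.
Proof. by rewrite /conj_emb coords_y1K. Qed.

Lemma conj_embB z w : conj_emb (z - w) = conj_emb z - conj_emb w.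
Proof.
rewrite -(coords_y1_invK z) -(coords_y1_invK w).
set c := coords_y1_inv z; set d := coords_y1_inv w.
have -> : coords_y1 c - coords_y1 d = coords_y1 (c.1 - d.1, c.2 - d.2).
  by rewrite /coords_y1 /= !rmorphB; ring.
by rewrite !conj_emb_coords /= !rmorphB; ring.
Qed.

Lemma conj_embM z w : conj_emb (z * w) = conj_emb z * conj_emb w.
Proof.
rewrite -(coords_y1_invK z) -(coords_y1_invK w).
set c := coords_y1_inv z; set d := coords_y1_inv w.
have -> : coords_y1 c * coords_y1 d = coords_y1 (c.1 * d.1 + c.2 * d.2 * r0,
    c.1 * d.2 + c.2 * d.1 + c.2 * d.2 * r1).
  rewrite /coords_y1 /= !rmorphD !rmorphM.
  have -> : (iota c.1 + iota c.2 * y1) * (iota d.1 + iota d.2 * y1) =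
    iota c.1 * iota d.1 + (iota c.1 * iota d.2 + iota c.2 * iota d.1) * y1
    + iota c.2 * iota d.2 * y1 ^+ 2 by ring.
  by rewrite (ordinate_sq hon); ring.
rewrite !conj_emb_coords /= !rmorphD !rmorphM.
have -> : (j c.1 + j c.2 * be) * (j d.1 + j d.2 * be) =
    j c.1 * j d.1 + (j c.1 * j d.2 + j c.2 * j d.1) * be
    + j c.2 * j d.2 * be ^+ 2 by ring.
by rewrite (ordinate_sq hbe); ring.
Qed.

Lemma conj_emb_iota c : conj_emb (iota c) = j c.
Proof.
have -> : iota c = coords_y1 (c, 0) by rewrite /coords_y1 /= rmorph0 mul0r addr0.
by rewrite conj_emb_coords /= rmorph0 mul0r addr0.
Qed.

Lemma conj_emb_y1 : conj_emb y1 = be.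
Proof.
have -> : y1 = coords_y1 (0, 1) by rewrite /coords_y1 /= rmorph0 rmorph1 mul1r add0r.
by rewrite conj_emb_coords /= rmorph0 rmorph1 mul1r add0r.
Qed.

HB.instance Definition _ := GRing.isZmodMorphism.Build K L conj_emb conj_embB.
Lemma conj_emb1 : conj_emb 1 = 1.
Proof. by rewrite -(rmorph1 iota) conj_emb_iota rmorph1. Qed.

HB.instance Definition _ :=
  GRing.isMonoidMorphism.Build K L conj_emb (conj_emb1, conj_embM).

Lemma conj_of_above : conj_of iota j (Some (iota a0, y1)) (Some (j a0, be)).
Proof.
exists conj_emb; split; first exact: conj_emb_iota.
by rewrite /ptmap /= conj_emb_iota conj_emb_y1.
Qed.
End Embedding.
End ConjugatePoint.

Lemma test_fun_inLD (F K : finFieldType) (E : wcurve F) (iota : {rmorphism F -> K})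
    (k : nat) (a0 : F) (y1 : K) (bs : seq F) (o : bool) :
  nonsingular E -> #|K| = (#|F| ^ 2)%N ->
  (forall c, y1 != iota c) -> onEb (wmap iota E) (Some (iota a0, y1)) ->
  2%:R * y1 + iota (wa1 E) * iota a0 + iota (wa3 E) != 0 ->
  (size bs + o <= k)%N -> inLD E iota (Some (iota a0, y1)) k (test_fun a0 bs o).
Proof.
move=> hns hK hy1 hon hwy hko; split; first exact: wf_test_fun.
have rexp0 (L : fieldType) (t f : rfun L) : rmul (rexp t 0) f = f.
  by case: f => f1 f2; rewrite /rmul /rexp /= !expr0 !mul1r.
move=> L j R hR; rewrite rmap_test_fun; split.
  move=> [s [hs hRs]]; rewrite /ptmap /= hs in hRs; subst R.
  exists (Xx L - ((j a0)%:P)%:P, 1); split.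
    apply: uniformizer_x_sub => //=.
    have : s (2%:R * y1 + iota (wa1 E) * iota a0 + iota (wa3 E)) != 0.
      by rewrite fmorph_eq0.
    by rewrite !rmorphD !rmorphM !hs rmorph_nat.
  by apply: regular_at_test_fun; rewrite size_map.
move=> ncj; case: R hR ncj => [[al be]|] hR ncj; last first.
  exists (Xx L, 'X); split; first exact: uniformizer_infinity.
  by rewrite rexp0; eexists; apply: val_at_inf_test_fun.
have [t ht] := uniformizer_affine hR (hns L j al be hR).
exists t; split => //; rewrite rexp0.
have [ha|ha] := eqVneq al (j a0); last by eexists; apply: val_at_aff_test_fun.
by exfalso; apply: ncj; subst al; apply: (conj_of_above hy1 hon hK hR).
Qed.

Lemma hweight_row (F : finFieldType) (T : finType) (A : {set T}) (g : T -> F) :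
  hweight (\row_(i < #|A|) g (enum_val i)) = #|[set t in A | g t != 0]|.
Proof.
rewrite /hweight -(card_imset _ enum_val_inj); apply: eq_card => t.
apply/imsetP/idP.
  by move=> [i hi ->]; rewrite inE enum_valP /=; move: hi; rewrite inE mxE.
rewrite inE => /andP [ht hg]; exists (enum_rank_in ht t); last by rewrite enum_rankK_in.
by rewrite inE mxE enum_rankK_in.
Qed.

Lemma Zp_double_eq0 (p : nat) (z : 'Z_p) : prime p -> odd p -> z + z = 0 -> z = 0.
Proof.
move=> hp ho h; have u2 : ((2%:R : 'Z_p) \is a GRing.unit) by rewrite unitZpE ?prime_gt1 // coprimen2.
by apply: (mulrI u2); rewrite mulr0 mulr_natl mulr2n.
Qed.

Section RationalPoints.
Variables (F : finFieldType) (E : wcurve F) (p : nat).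
Hypotheses (hp : prime p) (hodd : odd p) (hiso : ratpts_iso_ZpZp E p).

Lemma card_ratpts : #|ratpts E| = (p ^ 2)%N.
Proof.
have [psi [h1 h2 h3 _]] := hiso.
have -> : ratpts E = psi @: setT.
  apply/setP => P; rewrite !inE; apply/idP/imsetP; last by move=> [u _ ->]; apply: h1.
  by move=> /h3 [u <-]; exists u; rewrite ?inE.
by rewrite card_imset // cardsT card_prod card_ord Zp_cast ?prime_gt1 // expnS expn1.
Qed.

Lemma ratpt_no_2torsion b be : onEb E (Some (b, be)) -> be + be + wa1 E * b + wa3 E != 0.
Proof.
have [psi [h1 h2 h3 h4]] := hiso; move=> hon; apply/negP => /eqP h.
have psi0 : psi (0, 0) = None.
  have [[v1 v2] hv] := h3 None isT.
  have : psi (v1 + v1, v2 + v2) = psi (v1, v2) by rewrite (h4 (v1, v2) (v1, v2)) hv.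
  move=> /h2 e; rewrite -hv; congr psi.
  have e1 : v1 + v1 = v1 := congr1 fst e; have e2 : v2 + v2 = v2 := congr1 snd e.
  have -> : v1 = 0 by apply: (addIr v1); rewrite add0r.
  by have -> : v2 = 0 by apply: (addIr v2); rewrite add0r.
have [[u1 u2] hu] := h3 _ hon.
have : psi (u1 + u1, u2 + u2) = psi (0, 0).
  by rewrite (h4 (u1, u2) (u1, u2)) hu /= eqxx h eqxx psi0.
move=> /h2 e; have e1 : u1 + u1 = 0 := congr1 fst e; have e2 : u2 + u2 = 0 := congr1 snd e.
by move: hu; rewrite (Zp_double_eq0 hp hodd e1) (Zp_double_eq0 hp hodd e2) psi0.
Qed.

Definition x_in (bs : seq F) (P : option (F * F)) : bool :=
  if P is Some (al, _) then al \in bs else false.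

Lemma ratpts_fiber b be : onEb E (Some (b, be)) -> [set P in ratpts E | x_in [:: b] P] =
  [set Some (b, be); Some (b, - be - wa1 E * b - wa3 E)].
Proof.
move=> hon; apply/setP => -[[al ga]|]; rewrite !inE //= in_cons in_nil orbF.
apply/andP/orP.
  move=> [hg /eqP hb]; subst al; move/eqP: hg => hg; move/eqP: hon => hon.
  have e : (ga - be) * (ga + be + wa1 E * b + wa3 E) = 0.
    have -> : (ga - be) * (ga + be + wa1 E * b + wa3 E) = (ga ^+ 2 + wa1 E * b * ga
      + wa3 E * ga) - (be ^+ 2 + wa1 E * b * be + wa3 E * be) by ring.
    by rewrite hg hon subrr.
  move/eqP: e; rewrite mulf_eq0 => /orP [/eqP e|/eqP e].
    by left; rewrite -(subr0 ga) -e subKr.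
  right; apply/eqP; congr (Some (_, _)).
  by apply/eqP; rewrite -subr_eq0 -e; apply/eqP; ring.
move=> [/eqP [-> ->]|/eqP [-> ->]]; rewrite eqxx ?andbT; split => //.
by move/eqP: hon => hon; apply/eqP; rewrite -hon; ring.
Qed.

Lemma card_ratpts_fiber b be : onEb E (Some (b, be)) ->
  #|[set P in ratpts E | x_in [:: b] P]| = 2%N.
Proof.
move=> hon; rewrite (ratpts_fiber hon) cards2.
suff -> : Some (b, be) != Some (b, - be - wa1 E * b - wa3 E) by [].
apply/eqP => -[e]; have := ratpt_no_2torsion hon; rewrite {2}e.
suff -> : be + (- be - wa1 E * b - wa3 E) + wa1 E * b + wa3 E = 0 by rewrite eqxx.
ring.
Qed.

Definition rational_xs (bs : seq F) :=
  forall b, b \in bs -> exists be, onEb E (Some (b, be)).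

Lemma card_ratpts_x_in bs : uniq bs -> rational_xs bs ->
  #|[set P in ratpts E | x_in bs P]| = (2 * size bs)%N.
Proof.
elim: bs => [|b bs IH] /=.
  move=> _ _; rewrite muln0; apply/eqP; rewrite cards_eq0; apply/eqP/setP => P.
  by rewrite !inE; case: P => [[]|] //= *; rewrite andbF.
move=> /andP [nb ub] hg.
have hg' : rational_xs bs by move=> c hc; apply: hg; rewrite in_cons hc orbT.
have [be hbe] := hg b (mem_head _ _).
have -> : [set P in ratpts E | x_in (b :: bs) P] =
   [set P in ratpts E | x_in [:: b] P] :|: [set P in ratpts E | x_in bs P].
  by apply/setP => -[[al ga]|]; rewrite !inE //= !in_cons in_nil orbF andb_orr.
rewrite cardsU (card_ratpts_fiber hbe) IH //.
have -> : [set P in ratpts E | x_in [:: b] P] :&: [set P in ratpts E | x_in bs P] = set0.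
  apply/setP => -[[al ga]|]; rewrite !inE //= in_cons in_nil orbF.
  by case: (al =P b) => [->|_]; rewrite ?(negbTE nb) !andbF.
by rewrite cards0 subn0 mulnS.
Qed.

Lemma exists_rational_xs m : (2 * m < p ^ 2)%N ->
  exists bs, [/\ uniq bs, size bs = m & rational_xs bs].
Proof.
elim: m => [|m IH] hm; first by exists [::].
have [bs [ub sb gb]] : exists bs, [/\ uniq bs, size bs = m & rational_xs bs].
  by apply: IH; move: hm; set P2 := (p ^ 2)%N; clearbody P2; lia.
case: (pickP (fun P => (P \in ratpts E) && (P != None) && ~~ x_in bs P)) => [P|none].
  case: P => [[b be]|]; rewrite ?eqxx ?andbF //= inE => /andP [/andP [hon _] nb].
  exists (b :: bs); split => /=; [by rewrite nb ub | by rewrite sb |].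
  by move=> c; rewrite in_cons => /orP [/eqP ->|]; [exists be | apply: gb].
(* Otherwise the 2m points above bs and infinity exhaust the p^2 > 2m + 1 points. *)
exfalso.
have hsub : ratpts E \subset None |: [set P in ratpts E | x_in bs P].
  apply/subsetP => P hP; rewrite !inE; have := none P; rewrite hP /=.
  by case: (P =P None) => [->|_] //= /negbFE ->; move: hP; rewrite inE => ->.
have := subset_leq_card hsub; rewrite card_ratpts cardsU1 card_ratpts_x_in // sb.
by move: hm; set P2 := (p ^ 2)%N; clearbody P2; case: (_ \notin _) => /=; lia.
Qed.

Variables (a0 : F) (bs : seq F) (o : bool).
Hypotheses (ha0 : forall be, ~~ onEb E (Some (a0, be)))
  (ubs : uniq bs) (rbs : rational_xs bs).

Definition test_value (P : option (F * F)) : F :=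
  if P is Some (al, _) then test_val a0 bs o al else (if o then 0 else 1).

Definition test_word : 'rV[F]_#|ratpts E| := \row_i test_value (enum_val i).

Lemma test_value_zeros : [set P in ratpts E | test_value P == 0] =
  (if o then None |: [set P in ratpts E | x_in bs P] else [set P in ratpts E | x_in bs P]).
Proof.
apply/setP => -[[al be]|]; last by rewrite !inE /=; case: o; rewrite !inE /= ?eqxx ?oner_eq0 ?andbF.
rewrite !inE; case hP : (onEb E (Some (al, be))); last by case: o; rewrite /= !inE hP.
have ha : al != a0 by apply: contraPneq hP => ->; apply/negP/ha0.
by rewrite /= test_val_eq0 //; case: o; rewrite /= !inE hP.
Qed.

Lemma hweight_test_word : hweight test_word = (p ^ 2 - (o + 2 * size bs))%N.
Proof.
rewrite hweight_row -card_ratpts -(card_ratpts_x_in ubs rbs).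
rewrite -(cardsID [set P | test_value P == 0] (ratpts E)).
have -> : ratpts E :&: [set P | test_value P == 0] = [set P in ratpts E | test_value P == 0].
  by apply/setP => P; rewrite !inE.
have -> : ratpts E :\: [set P | test_value P == 0] = [set P in ratpts E | test_value P != 0].
  by apply/setP => P; rewrite !inE andbC.
by rewrite test_value_zeros; case: o; rewrite ?cardsU1 ?inE /= ?andbF ?add0n addKn.
Qed.

End RationalPoints.

Theorem mainTheorem7 (F K : finFieldType) (E : wcurve F) (p : nat)
    (iota : {rmorphism F -> K}) (Q : option (K * K)) (k : nat) :
  (7 <= #|F|)%N ->
  prime p -> odd p ->
  nonsingular E ->
  ratpts_iso_ZpZp E p ->
  #|K| = (#|F| ^ 2)%N ->
  onEb (wmap iota E) Q ->
  ~ (exists P, onEb E P /\ ptmap iota P = Q) ->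
  addE (wmap iota E) Q (frob #|F| Q) = None ->
  (p %| k)%N -> (0 < k)%N -> (2 * k < p ^ 2)%N ->
  forall w : nat, (p ^ 2 - 2 * k <= w <= p ^ 2)%N ->
    (0 < A_w E iota Q k w)%N.
Proof.
move=> _ hp hodd hns hiso hK hQ hnr hfr _ _ hk2 w /andP [hw1 hw2].
have [a0 [y1 [eQ hy1 hwy]]] := conj_point_form hQ hnr hfr; subst Q.
have hzo := odd_double_half (p ^ 2 - w).
set m := (p ^ 2 - w)./2 in hzo; set o := odd (p ^ 2 - w) in hzo.
have hm : (2 * m < p ^ 2)%N.
  by move: hw1 hk2 hzo; set P2 := (p ^ 2)%N; clearbody P2; rewrite -muln2; case: o; lia.
have [bs [ubs sbs rbs]] := exists_rational_xs hp hodd hiso hm.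
rewrite /A_w card_gt0; apply/set0Pn; exists (test_word E a0 bs o); rewrite inE.
apply/andP; split.
  apply/asboolP; exists (test_fun a0 bs o); split.
    apply: test_fun_inLD => //; rewrite sbs.
    by move: hw1 hk2 hzo; set P2 := (p ^ 2)%N; clearbody P2; rewrite -muln2; case: o; lia.
  move=> i; rewrite mxE; have := enum_valP i; rewrite inE.
  case: (enum_val i) => [[al be]|] hP /=; last exact: val_at_inf_test_fun.
  apply: val_at_aff_test_fun; apply: contraPneq hP => ->.
  exact/negP/no_ratpt_above.
rewrite (hweight_test_word hp hodd hiso o (no_ratpt_above hy1 hQ) ubs rbs) sbs.
by apply/eqP; move: hzo hw2; rewrite -muln2; set P2 := (p ^ 2)%N; clearbody P2; lia.
Qed.
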